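(* Let $S$ be an AG-groupoid with left identity $e$, and let $P$ be a left ideal of $S$. Then $P$ is quasi-prime if and only if for all $a,b\in S$, $(Sa)b\subseteq P$ implies $a\in P$ or $b\in P$.
   Context: An AG-groupoid is a set $S$ with a binary operation satisfying $(ab)c=(cb)a$ for all $a,b,c\in S$. A left identity is an element $e$ with $ea=a$ for all $a\in S$. For nonempty subsets, $AB=\{ab:a\in A,b\in B\}$; for $a\in S$, $Sa=\{sa:s\in S\}$ and $(Sa)b=\{(sa)b: s\in S\}$. A left ideal is a nonempty subset $I$ with $SI\subseteq I$. A left ideal $P$ is quasi-prime if for all left ideals $A,B$ of $S$, $AB\subseteq P$ implies $A\subseteq P$ or $B\subseteq P$. *)

Definition AG_groupoid {S : Type} (mul : S -> S -> S) : Prop :=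
  forall a b c : S, mul (mul a b) c = mul (mul c b) a.

Definition left_identity {S : Type} (mul : S -> S -> S) (e : S) : Prop :=
  forall a : S, mul e a = a.

Definition subset {S : Type} (A B : S -> Prop) : Prop := forall x, A x -> B x.

Definition setmul {S : Type} (mul : S -> S -> S) (A B : S -> Prop) : S -> Prop :=
  fun x => exists a b, A a /\ B b /\ x = mul a b.

Definition left_ideal {S : Type} (mul : S -> S -> S) (I : S -> Prop) : Prop :=
  (exists x, I x) /\ subset (setmul mul (fun _ => True) I) I.

Definition quasi_prime {S : Type} (mul : S -> S -> S) (P : S -> Prop) : Prop :=
  left_ideal mul P /\
  forall A B : S -> Prop, left_ideal mul A -> left_ideal mul B ->
    subset (setmul mul A B) P -> subset A P \/ subset B P.

Definition Sab {S : Type} (mul : S -> S -> S) (a b : S) : S -> Prop :=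
  fun x => exists s, x = mul (mul s a) b.

From Stdlib Require Import Classical.

(* The key algebraic fact is the identity a(bc) = b(ac), which holds in any
   AG-groupoid with a left identity.  With it one shows that Sa is a left
   ideal containing a, and that (Sa)(Sb) lies in every left ideal containing
   (Sa)b.  Hence if P is quasi-prime and (Sa)b is contained in P, the left
   ideals Sa and Sb have their product in P, so a or b lies in P.
   Conversely, if A and B are left ideals with AB contained in P and some
   a in A lies outside P, then for each b in B the set (Sa)b lies in AB,
   hence in P, which forces b into P; thus B is contained in P. *)

Section AGGroupoid.

Variable S : Type.
Variable mul : S -> S -> S.
Variable e : S.
Hypothesis hAG : AG_groupoid mul.
Hypothesis he : left_identity mul e.

Definition left_multiples (a : S) : S -> Prop := fun x => exists s, x = mul s a.

Lemma mul_left_comm (a b c : S) : mul a (mul b c) = mul b (mul a c).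
Proof.
  rewrite <- (he a) at 1.
  rewrite hAG, (hAG b c a), <- hAG, he.
  reflexivity.
Qed.

Lemma left_ideal_mul_l (I : S -> Prop) (s x : S) :
  left_ideal mul I -> I x -> I (mul s x).
Proof.
  intros [_ HI] Hx. apply HI. exists s, x. auto.
Qed.

Lemma left_multiples_self (a : S) : left_multiples a a.
Proof. exists e. symmetry. apply he. Qed.

(* Sa is a left ideal: s(ta) = ((se)t)a. *)
Lemma left_multiples_left_ideal (a : S) : left_ideal mul (left_multiples a).
Proof.
  split.
  - exists a. apply left_multiples_self.
  - intros x [s [y [_ [[t Ht] Hx]]]]. subst.
    exists (mul (mul s e) t).
    rewrite hAG, (mul_left_comm (mul a t) s e), (hAG a t e), he.
    reflexivity.
Qed.

(* (sa)(tb) = t((sa)b), so (Sa)(Sb) lies in any left ideal containing (Sa)b. *)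
Lemma left_multiples_product_sub (P : S -> Prop) (a b : S) :
  left_ideal mul P -> subset (Sab mul a b) P ->
  subset (setmul mul (left_multiples a) (left_multiples b)) P.
Proof.
  intros hP Hab x [u [v [[s Hs] [[t Ht] Hx]]]]. subst.
  rewrite mul_left_comm.
  apply left_ideal_mul_l; [exact hP |].
  apply Hab. exists s. reflexivity.
Qed.

Lemma Sab_sub_product (A B : S -> Prop) (a b : S) :
  left_ideal mul A -> A a -> B b -> subset (Sab mul a b) (setmul mul A B).
Proof.
  intros HA Aa Bb x [s Hx]. subst.
  exists (mul s a), b.
  split; [apply left_ideal_mul_l; assumption | auto].
Qed.

Lemma quasi_prime_Sab (P : S -> Prop) :
  quasi_prime mul P ->
  forall a b : S, subset (Sab mul a b) P -> P a \/ P b.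
Proof.
  intros [hP HQ] a b Hab.
  destruct (HQ (left_multiples a) (left_multiples b)
              (left_multiples_left_ideal a) (left_multiples_left_ideal b)
              (left_multiples_product_sub P a b hP Hab)) as [Ha | Hb].
  - left. apply Ha, left_multiples_self.
  - right. apply Hb, left_multiples_self.
Qed.

Lemma Sab_quasi_prime (P : S -> Prop) :
  left_ideal mul P ->
  (forall a b : S, subset (Sab mul a b) P -> P a \/ P b) ->
  quasi_prime mul P.
Proof.
  intros hP H. split; [exact hP |].
  intros A B HA HB HAB.
  destruct (classic (subset A P)) as [HAP | HAP]; [left; exact HAP | right].
  apply not_all_ex_not in HAP. destruct HAP as [a Ha].
  apply imply_to_and in Ha. destruct Ha as [Aa Pa].
  intros b Bb.
  assert (Hab : subset (Sab mul a b) P).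
  { intros x Hx. apply HAB. exact (Sab_sub_product A B a b HA Aa Bb x Hx). }
  destruct (H a b Hab) as [Pa' | Pb]; [contradiction | exact Pb].
Qed.

End AGGroupoid.

Theorem theorem4 (S : Type) (mul : S -> S -> S) (e : S)
  (hAG : AG_groupoid mul) (he : left_identity mul e)
  (P : S -> Prop) (hP : left_ideal mul P) :
  quasi_prime mul P <->
  (forall a b : S, subset (Sab mul a b) P -> P a \/ P b).
Proof.
  split.
  - exact (quasi_prime_Sab S mul e hAG he P).
  - exact (Sab_quasi_prime S mul P hP).
Qed.
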